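(* Let $n\ge 2$, let $c_k,c_r$ be chains over $[n]$ with $1\le k,r\le n-1$, and let $p,q$ be distinct propositional letters. Then none of the following is derivable in $\mathbf{CPN}_n$: (i) $p\wedge_{(n)}\neg_{c_k}p\to_{(n)}q$; (ii) $p\wedge_{(n)}\neg_{c_k}p\to_{(n)}\perp_{(n)}$; (iii) $\neg_{c_k}(p\wedge_{(n)}\neg_{c_k}p)$; (iv) $p\vee_{(n)}\neg_{c_k}p$; (v) $\perp_{c_k}\to_{(n)}p$; (vi) $\neg_{c_r}\neg_{c_k}p\to_{(n)}p$, provided $c_r\ne c_k$. In particular $\{p,\neg_{c_k}p\}\not\vdash_{(n)}q$, so $\mathbf{CPN}_n$ is paraconsistent with respect to each weak negation $\neg_{c_k}$.
   Context: Fix $n\in\mathbb{N}$, $n\ge 1$, and write $[n]=\{1,\dots,n\}$. Chains: a chain over $[n]$ is a finite sequence of distinct elements of $[n]$; chains with the same length and the same symbols are identified, so a chain is effectively a subset of $[n]$. $c_k$ denotes a chain with $k$ symbols, $\epsilon$ the empty chain, and $(n)$ the chain consisting of all symbols of $[n]$. For chains $c,d$: the concatenation $c\cdot d$ is the chain of symbols occurring in $c$ or in $d$; the coconcatenation $c\otimes d$ is the chain of symbols occurring in exactly one of $c,d$; $d$ is a subchain of $c$ if every symbol of $d$ is a symbol of $c$. The complementary chain $c'_{n-k}$ of $c_k$ is the chain of the symbols of $[n]$ not occurring in $c_k$. Language of $\mathbf{CPN}_n$: a countable set $P_n$ of propositional letters; constants $\perp_c$ for each chain $c$ over $[n]$ with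 $1\le |c|\le n-1$, and constants $\perp_{(n)}$ (contradiction) and $\top_{(n)}$ (truth); a unary connective $\neg_c$ for each nonempty chain $c$ over $[n]$ ($\neg_{(n)}$ is the strong negation; the $\neg_c$ with $|c|\le n-1$ are weak negations); a binary connective $\to_{(n)}$. Formulas: propositional letters and constants are formulas; if $\varphi,\psi$ are formulas then so are $\neg_c\varphi$ and $(\varphi\to_{(n)}\psi)$. Conventions: $\neg_\epsilon\varphi:=\varphi$, $\perp_\epsilon:=\top_{(n)}$, and $\perp_c$ for $c=(n)$ means $\perp_{(n)}$. Abbreviations: $\varphi\wedge_{(n)}\psi:=\neg_{(n)}(\varphi\to_{(n)}\neg_{(n)}\psi)$, $\varphi\vee_{(n)}\psi:=\neg_{(n)}\varphi\to_{(n)}\psi$, $\varphi\leftrightarrow_{(n)}\psi:=(\varphi\to_{(n)}\psi)\wedge_{(n)}(\psi\to_{(n)}\varphi)$. Axioms of $\mathbf{CPN}_n$, for all formulas $\varphi,\psi,\chi$ and all nonempty chains $c_k,c_r$ over $[n]$: (A1) $\varphi\to_{(n)}(\psi\to_{(n)}\varphi)$; (A2) $(\varphi\to_{(n)}(\psi\to_{(n)}\chi))\to_{(n)}((\varphi\to_{(n)}\psi)\to_{(n)}(\varphi\to_{(n)}\chi))$; (A3) $(\neg_{(n)}\psi\to_{(n)}\neg_{(n)}\varphi)\to_{(n)}((\neg_{(n)}\psi\to_{(n)}\varphi)\to_{(n)}\psi)$; (A4) $\varphi\to_{(n)}(\perp_{c_k}\to_{(n)}\neg_{c_k}\varphi)$;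 (A5) $\neg_{c_k}\neg_{c_r}\varphi\leftrightarrow_{(n)}\neg_{c_k\otimes c_r}\varphi$; (A6) $\neg_{c_k}\perp_{c_r}\leftrightarrow_{(n)}\perp_{c_k\otimes c_r}$; (A7) $\perp_{c_k}\to_{(n)}\perp_{c_r}$, whenever $c_r$ is a subchain of $c_k$. The only rule of inference is modus ponens (from $\varphi$ and $\varphi\to_{(n)}\psi$ infer $\psi$). For a set $\Sigma$ of formulas, $\Sigma\vdash_{(n)}\varphi$ means there is a finite sequence of formulas ending with $\varphi$, each of which is an axiom, a member of $\Sigma$, or obtained from two earlier members by modus ponens; $\vdash_{(n)}\varphi$ means $\emptyset\vdash_{(n)}\varphi$. *)

From mathcomp Require Import all_boot.
Set Implicit Arguments. Unset Strict Implicit. Unset Printing Implicit Defensive.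

(* The symbol set [n] = {1,..,n} is represented by 'I_n
   (elements 0..n-1). A chain (identified up to order) is a subset
   c : {set 'I_n}; |c| = #|c|; epsilon = set0; (n) = setT. *)

Definition cocat (n : nat) (c d : {set 'I_n}) : {set 'I_n} :=
  (c :\: d) :|: (d :\: c).

(* FBot c is the constant bot_c; by the paper's conventions FBot set0 is
   top_(n) and FBot setT is bot_(n) (contradiction); the other subsets are
   the constants bot_c with 1 <= |c| <= n-1.  FNeg c is the negation neg_c,
   available only for nonempty chains c. *)
Inductive form (n : nat) : Type :=
| FVar : nat -> form n
| FBot : {set 'I_n} -> form n
| FNeg : forall c : {set 'I_n}, c != set0 -> form n -> form n
| FImp : form n -> form n -> form n.

Arguments FVar {n}.

Definition negF (n : nat) (c : {set 'I_n}) (phi : form n) : form n :=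
  match (c != set0) as b return (c != set0) = b -> form n with
  | true => fun h => FNeg h phi
  | false => fun _ => phi
  end (erefl _).

Definition snegF (n : nat) (phi : form n) : form n := negF setT phi.
Definition andF (n : nat) (phi psi : form n) : form n :=
  snegF (FImp phi (snegF psi)).
Definition orF (n : nat) (phi psi : form n) : form n := FImp (snegF phi) psi.
Definition iffF (n : nat) (phi psi : form n) : form n :=
  andF (FImp phi psi) (FImp psi phi).

Inductive axiom (n : nat) : form n -> Prop :=
| A1 phi psi : axiom (FImp phi (FImp psi phi))
| A2 phi psi chi : axiom (FImp (FImp phi (FImp psi chi))
                          (FImp (FImp phi psi) (FImp phi chi)))
| A3 phi psi : axiom (FImp (FImp (snegF psi) (snegF phi))
                          (FImp (FImp (snegF psi) phi) psi))
| A4 (c : {set 'I_n}) phi : c != set0 ->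
    axiom (FImp phi (FImp (FBot c) (negF c phi)))
| A5 (c d : {set 'I_n}) phi : c != set0 -> d != set0 ->
    axiom (iffF (negF c (negF d phi)) (negF (cocat c d) phi))
| A6 (c d : {set 'I_n}) : c != set0 -> d != set0 ->
    axiom (iffF (negF c (FBot d)) (FBot (cocat c d)))
| A7 (c d : {set 'I_n}) : c != set0 -> d != set0 -> d \subset c ->
    axiom (FImp (FBot c) (FBot d)).

(* Sigma |-_(n) phi : derivability with modus ponens (the inductive closure
   is equivalent to the existence of a finite derivation sequence). *)
Inductive deriv (n : nat) (Sigma : form n -> Prop) : form n -> Prop :=
| d_ax phi : axiom phi -> deriv Sigma phi
| d_hyp phi : Sigma phi -> deriv Sigma phi
| d_mp phi psi : deriv Sigma phi -> deriv Sigma (FImp phi psi) -> deriv Sigma psi.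

Definition provable (n : nat) (phi : form n) : Prop :=
  deriv (fun _ => False) phi.

From mathcomp Require Import all_boot.
Set Implicit Arguments. Unset Strict Implicit. Unset Printing Implicit Defensive.

(* Every symbol j of [n] yields a two-valued model of CPN_n: neg_c is
   classical negation when j lies in c and the identity otherwise, and bot_c
   is true exactly when j lies outside c.  Coconcatenation becomes exclusive
   or of memberships, so all axioms are valid and every derivable formula is
   true in every such model.  Taking j outside c_k turns neg_{c_k} p into p,
   which refutes (i)-(v) and the paraconsistency claim; taking j in exactly
   one of c_r, c_k turns neg_{c_r} neg_{c_k} p into the classical negation of
   p, which refutes (vi). *)

Section SymbolSemantics.
Variables (n : nat) (j : 'I_n) (v : nat -> bool).

Fixpoint eval (phi : form n) : bool :=
  match phi with
  | FVar x => v x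
  | FBot c => j \notin c
  | FNeg c _ psi => (j \in c) (+) eval psi
  | FImp psi chi => eval psi ==> eval chi
  end.

Lemma eval_negF c phi : eval (negF c phi) = (j \in c) (+) eval phi.
Proof.
rewrite /negF; move: (erefl (c != set0)).
case: {2 3}(c != set0) => // /negbFE/eqP ->.
by rewrite inE.
Qed.

Lemma eval_negF_notin (c : {set 'I_n}) phi : j \notin c -> eval (negF c phi) = eval phi.
Proof. by rewrite eval_negF => /negbTE ->. Qed.

Lemma eval_snegF phi : eval (snegF phi) = ~~ eval phi.
Proof. by rewrite /snegF eval_negF inE. Qed.

Lemma eval_andF phi psi : eval (andF phi psi) = eval phi && eval psi.
Proof. by rewrite /andF eval_snegF /= eval_snegF negb_imply negbK. Qed.

Lemma eval_iffF phi psi : eval (iffF phi psi) = (eval phi == eval psi).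
Proof. by rewrite eval_andF /=; case: (eval phi); case: (eval psi). Qed.

Lemma in_cocat c d : (j \in cocat c d) = (j \in c) (+) (j \in d).
Proof. by rewrite !inE; case: (j \in c); case: (j \in d). Qed.

Lemma eval_axiom phi : axiom phi -> eval phi.
Proof.
case=> /= [psi chi | psi chi xi | psi chi | c psi _ | c d psi _ _ | c d _ _
           | c d _ _ /subsetP cd].
- by case: (eval psi); case: (eval chi).
- by case: (eval psi); case: (eval chi); case: (eval xi).
- by rewrite !eval_snegF; case: (eval psi); case: (eval chi).
- by rewrite eval_negF; case: (eval psi); case: (j \in c).
- rewrite eval_iffF !eval_negF in_cocat.
  by case: (eval psi); case: (j \in c); case: (j \in d).
- rewrite eval_iffF eval_negF /= in_cocat.
  by case: (j \in c); case: (j \in d).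
- by apply/implyP/contra; apply: cd.
Qed.

Lemma eval_deriv (Sigma : form n -> Prop) phi :
  (forall psi, Sigma psi -> eval psi) -> deriv Sigma phi -> eval phi.
Proof.
move=> Sigma_true; elim=> [psi /eval_axiom | psi /Sigma_true | psi chi _ + _] //=.
by move=> -> /implyP; apply.
Qed.

Lemma eval_provable phi : provable phi -> eval phi.
Proof. exact: eval_deriv. Qed.

End SymbolSemantics.

Lemma not_provable_of_false_eval n (j : 'I_n) v (phi : form n) :
  ~~ eval j v phi -> ~ provable phi.
Proof. by move=> /negP + /(eval_provable j v). Qed.

Lemma exists_notin_small_chain n (c : {set 'I_n}) :
  #|c| < n -> exists j, j \notin c.
Proof.
move=> small_c; have: c \proper setT by rewrite properEcard subsetT cardsT card_ord.
by case/properP=> _ [j _ j_c]; exists j.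
Qed.

Lemma exists_in_cocat n (c d : {set 'I_n}) :
  c != d -> exists j, (j \in c) (+) (j \in d).
Proof.
move=> cd; have: cocat c d != set0.
  apply: contra cd; rewrite setU_eq0 !setD_eq0 => sub_cd.
  by rewrite eqEsubset.
by case/set0Pn=> j; rewrite in_cocat; exists j.
Qed.

Theorem mainTheorem11 (n : nat) (hn : 2 <= n) (ck cr : {set 'I_n})
    (hk : 0 < #|ck| < n) (hr : 0 < #|cr| < n) (p q : nat) (hpq : p <> q) :
  let P := @FVar n p in let Q := @FVar n q in
  ~ provable (FImp (andF P (negF ck P)) Q) /\
      ~ provable (FImp (andF P (negF ck P)) (FBot setT)) /\
      ~ provable (negF ck (andF P (negF ck P))) /\
      ~ provable (orF P (negF ck P)) /\
      ~ provable (FImp (FBot ck) P) /\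
      (cr != ck -> ~ provable (FImp (negF cr (negF ck P)) P)) /\
      ~ deriv (fun phi => phi = P \/ phi = negF ck P) Q.
Proof.
move=> P Q; case/andP: hk => _ /exists_notin_small_chain [j j_ck].
pose only_p x := x == p; pose none (x : nat) := false.
have only_p_q : only_p q = false by apply/negbTE/eqP => /esym.
have contradiction_is_p v : eval j v (andF P (negF ck P)) = v p.
  by rewrite eval_andF eval_negF_notin // andbb.
split; [|split; [|split; [|split; [|split; [|split]]]]].
- apply: (not_provable_of_false_eval (j := j) (v := only_p)).
  by rewrite /= contradiction_is_p only_p_q /only_p eqxx.
- apply: (not_provable_of_false_eval (j := j) (v := only_p)).
  by rewrite /= contradiction_is_p /only_p eqxx inE.
- apply: (not_provable_of_false_eval (j := j) (v := none)).
  by rewrite eval_negF_notin // contradiction_is_p.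
- apply: (not_provable_of_false_eval (j := j) (v := none)).
  by rewrite /= eval_snegF eval_negF_notin.
- by apply: (not_provable_of_false_eval (j := j) (v := none)); rewrite /= j_ck.
- case/exists_in_cocat=> i i_cr_ck.
  apply: (not_provable_of_false_eval (j := i) (v := none)).
  by rewrite /= !eval_negF; move: i_cr_ck; case: (i \in cr); case: (i \in ck).
- have premises_true psi : psi = P \/ psi = negF ck P -> eval j only_p psi.
    by case=> ->; rewrite ?eval_negF_notin //= /only_p eqxx.
  by move=> /(eval_deriv premises_true) /=; rewrite only_p_q.
Qed.
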